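(* Let $\frac13<q<1$ and let $a>0$. Define the probability distribution $p^{(a)}=(p^{(a)}_k)_{k\in\mathbb{Z}}$ on $\mathbb{Z}$ by $$p^{(a)}_k=f_q(a)^{-1}\Big(1+\frac{k^2}{a^2}\Big)^{\frac{1}{q-1}},\qquad f_q(a)=\sum_{k\in\mathbb{Z}}\Big(1+\frac{k^2}{a^2}\Big)^{\frac{1}{q-1}} .$$ Then $p^{(a)}$ has zero mean and finite variance $\sigma^2=\sum_{k\in\mathbb{Z}}k^2p^{(a)}_k$, and $p^{(a)}$ maximizes the Tsallis entropy $H_q$ over all probability distributions $p$ on $\mathbb{Z}$ satisfying $\sum_{k}k\,p_k=0$ and $\sum_k k^2p_k=\sigma^2$.
   Context: For a probability distribution $p=(p_k)_{k\in\mathbb{Z}}$ on $\mathbb{Z}$ and $q\neq 1$, the Tsallis entropy is $H_q(p)=\frac{1}{q-1}\big(1-\sum_{k\in\mathbb{Z}}p_k^q\big)$. In the paper $a^2=k_BT=1/\beta$ is interpreted as a temperature and $\sum_k k^2 p_k$ as the mean energy $U$. *)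

From Stdlib Require Import Reals ZArith.
From Coquelicot Require Import Coquelicot.
Open Scope R_scope.

Definition Zsummable (f : Z -> R) : Prop :=
  ex_series (fun n : nat => Rabs (f (Z.of_nat n))) /\
  ex_series (fun n : nat => Rabs (f (- Z.of_nat (S n))%Z)).

Definition Zsum (f : Z -> R) : R :=
  Series (fun n : nat => f (Z.of_nat n)) +
  Series (fun n : nat => f (- Z.of_nat (S n))%Z).

Definition is_prob (p : Z -> R) : Prop :=
  (forall k, 0 <= p k) /\ Zsummable p /\ Zsum p = 1.

Definition powq (x q : R) : R := if Rle_dec x 0 then 0 else Rpower x q.

Definition tsallis (q : R) (p : Z -> R) : R :=
  (1 - Zsum (fun k => powq (p k) q)) / (q - 1).

Definition qweight (q a : R) (k : Z) : R :=
  Rpower (1 + (IZR k)^2 / a^2) (1 / (q - 1)).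

Definition fq (q a : R) : R := Zsum (qweight q a).

Definition pa (q a : R) (k : Z) : R := qweight q a k / fq q a.

Definition mom1 (p : Z -> R) (k : Z) : R := IZR k * p k.
Definition mom2 (p : Z -> R) (k : Z) : R := (IZR k)^2 * p k.

(* The weights decay like |k|^(2/(q-1)), and 2/(q-1) < -3 exactly when q > 1/3, so by
   comparison with a p-series both p^(a) and its second moment are summable; p^(a) is even,
   hence centred.  The maximality is a Gibbs-type argument: with P = p^(a), the power
   P_k^(q-1) = f_q(a)^(1-q) (1 + k^2/a^2) is an affine combination of the constraint functions
   1 and k^2, so the sum of P_k^(q-1) p_k is the same for every admissible p as for P itself.
   Concavity of x |-> x^q gives p_k^q <= (1-q) P_k^q + q P_k^(q-1) p_k; summing yields
   sum p_k^q <= sum P_k^q, i.e. H_q(p) <= H_q(P) because q - 1 < 0. *)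

From Stdlib Require Import Reals ZArith Lra.
From Coquelicot Require Import Coquelicot.
Open Scope R_scope.

(** * Elementary real inequalities *)

Lemma ln_le_sub1 (x : R) : 0 < x -> ln x <= x - 1.
Proof. intros hx; pose proof (exp_ineq1_le (ln x)) as h; rewrite exp_ln in h by exact hx; lra. Qed.

Lemma Rpower_1_l (e : R) : Rpower 1 e = 1.
Proof. unfold Rpower; rewrite ln_1, Rmult_0_r; apply exp_0. Qed.

Lemma Rpower_ge_bernoulli (r e : R) : 0 < r -> e <= 0 -> 1 + e * (r - 1) <= Rpower r e.
Proof.
  intros hr he; unfold Rpower.
  eapply Rle_trans; [|apply exp_ineq1_le].
  pose proof (ln_le_sub1 r hr); nra.
Qed.

(* Weighted AM-GM: [t = E exp((1-q) ln t)] and [1 = E exp(-q ln t)] with [E = t^q]. *)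
Lemma Rpower_le_bernoulli (t q : R) : 0 < t -> 0 < q < 1 -> Rpower t q <= 1 + q * (t - 1).
Proof.
  intros ht hq; unfold Rpower.
  set (L := ln t); set (E := exp (q * L)).
  assert (hE : 0 < E) by apply exp_pos.
  assert (ht' : t = E * exp ((1 - q) * L)).
  { unfold E, L; rewrite <- exp_plus, <- (exp_ln t) at 1 by exact ht; f_equal; ring. }
  assert (h1 : 1 = E * exp (- (q * L))).
  { unfold E; rewrite <- exp_plus, <- exp_0; f_equal; ring. }
  pose proof (exp_ineq1_le ((1 - q) * L)); pose proof (exp_ineq1_le (- (q * L))).
  assert (E * (1 + (1 - q) * L) <= t) by (rewrite ht'; apply Rmult_le_compat_l; lra).
  assert (E * (1 + - (q * L)) <= 1) by (rewrite h1 at 2; apply Rmult_le_compat_l; lra).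
  fold E; nra.
Qed.

Lemma Rpower_le_base_nonpos (x y e : R) : 0 < x <= y -> e <= 0 -> Rpower y e <= Rpower x e.
Proof.
  intros hxy he; rewrite <- (Ropp_involutive e), (Rpower_Ropp y), (Rpower_Ropp x).
  apply Rinv_le_contravar; [apply exp_pos | apply Rle_Rpower_l; lra].
Qed.

Lemma Rpower_sub1 (y q : R) : 0 < y -> Rpower y q = Rpower y (q - 1) * y.
Proof.
  intros hy; rewrite <- (Rpower_1 y) at 3 by exact hy.
  rewrite <- Rpower_plus; f_equal; ring.
Qed.

Lemma sqr_div_sqr_ge0 (x a : R) : 0 < a -> 0 <= x ^ 2 / a ^ 2.
Proof. intros ha; apply Rmult_le_pos; [apply pow2_ge_0 | apply Rlt_le, Rinv_0_lt_compat, pow_lt, ha]. Qed.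

(** * Series of nonnegative terms *)

Lemma Series_nonneg (u : nat -> R) : (forall n, 0 <= u n) -> ex_series u -> 0 <= Series u.
Proof.
  intros hu hs.
  rewrite <- (Rmult_0_l (Series u)), <- Series_scal_l.
  apply Series_le; [|exact hs].
  intros n; rewrite Rmult_0_l; split; [lra | apply hu].
Qed.

Lemma ex_series_nonneg_bounded (u : nat -> R) (M : R) :
  (forall n, 0 <= u n) -> (forall N, sum_n u N <= M) -> ex_series u.
Proof.
  intros hu hM.
  destruct (ex_finite_lim_seq_incr (sum_n u) M) as [l hl]; [|exact hM|now exists l].
  intros n; rewrite sum_Sn; unfold plus; simpl; specialize (hu (S n)); lra.
Qed.

Lemma Rpower_neg_telescope (x t : R) : 0 < x -> 0 < t ->
  t * Rpower (x + 1) (- (t + 1)) <= Rpower x (- t) - Rpower (x + 1) (- t).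
Proof.
  intros hx ht.
  set (A := Rpower (x + 1) (- t)).
  assert (hA : 0 < A) by apply exp_pos.
  assert (hl : t * Rpower (x + 1) (- (t + 1)) = A * (t / (x + 1))).
  { unfold A; replace (- (t + 1)) with (- t + - (1)) by ring.
    rewrite Rpower_plus, (Rpower_Ropp (x + 1) 1), Rpower_1 by lra; field; lra. }
  assert (hr : Rpower x (- t) = A * Rpower (x / (x + 1)) (- t)).
  { unfold A; rewrite Rpower_mult_distr by (try apply Rdiv_lt_0_compat; lra).
    f_equal; field; lra. }
  pose proof (Rpower_ge_bernoulli (x / (x + 1)) (- t)
                ltac:(apply Rdiv_lt_0_compat; lra) ltac:(lra)) as hb.
  replace (1 + - t * (x / (x + 1) - 1)) with (1 + t / (x + 1)) in hb by (field; lra).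
  rewrite hl, hr.
  assert (A * (1 + t / (x + 1)) <= A * Rpower (x / (x + 1)) (- t))
    by (apply Rmult_le_compat_l; lra).
  lra.
Qed.

Lemma ex_series_Rpower_neg (s : R) : 1 < s -> ex_series (fun n => Rpower (INR n + 1) (- s)).
Proof.
  intros hs; set (t := s - 1).
  assert (ht : 0 < t) by (unfold t; lra).
  assert (hpart : forall N, sum_n (fun n => Rpower (INR n + 1) (- s)) N
                            <= 1 + (1 - Rpower (INR N + 1) (- t)) / t).
  { induction N as [|N IH].
    - rewrite sum_O; simpl; rewrite Rplus_0_l, !Rpower_1_l.
      unfold Rdiv; rewrite Rminus_diag, Rmult_0_l; lra.
    - rewrite sum_Sn; change (plus ?u ?v) with (u + v); rewrite S_INR.
      pose proof (Rpower_neg_telescope (INR N + 1) t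
                    ltac:(pose proof (pos_INR N); lra) ht) as htel.
      replace (t + 1) with s in htel by (unfold t; ring).
      apply (Rmult_le_compat_r (/ t)) in htel; [|apply Rlt_le, Rinv_0_lt_compat, ht].
      replace (t * Rpower (INR N + 1 + 1) (- s) * / t) with (Rpower (INR N + 1 + 1) (- s))
        in htel by (field; lra).
      unfold Rdiv in *; lra. }
  apply ex_series_nonneg_bounded with (M := 1 + 1 / t).
  - intros; apply Rlt_le, exp_pos.
  - intros N; eapply Rle_trans; [apply hpart|].
    pose proof (exp_pos (- t * ln (INR N + 1))) as hpos; fold (Rpower (INR N + 1) (- t)) in hpos.
    unfold Rdiv; apply Rplus_le_compat_l, Rmult_le_compat_r; [apply Rlt_le, Rinv_0_lt_compat|]; lra.
Qed.

(* [(n+1)^2 <= 2 (1 + a^2) (1 + n^2/a^2)] reduces the claim to the p-series of exponent [-2g]. *)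
Lemma ex_series_Rpower_decay (a g : R) : 0 < a -> g < -1/2 ->
  ex_series (fun n => Rpower (1 + INR n ^ 2 / a ^ 2) g).
Proof.
  intros ha hg; set (K := 2 * (1 + a ^ 2)).
  assert (hK : 0 < K) by (unfold K; nra).
  apply (ex_series_le (V := R_CompleteNormedModule))
    with (b := fun n => / Rpower K g * Rpower (INR n + 1) (2 * g)).
  - intros n; change norm with Rabs; rewrite Rabs_pos_eq by (apply Rlt_le, exp_pos).
    set (X := 1 + INR n ^ 2 / a ^ 2); set (Y := INR n + 1).
    assert (hY : 0 < Y) by (unfold Y; pose proof (pos_INR n); lra).
    pose proof (sqr_div_sqr_ge0 (INR n) a ha) as hn2.
    assert (hX : 0 < X) by (unfold X; lra).
    assert (hYX : Y * Y <= K * X).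
    { unfold X, Y, K; pose proof (pow2_ge_0 (INR n - 1)); pose proof (pow2_ge_0 a).
      replace (2 * (1 + a ^ 2) * (1 + INR n ^ 2 / a ^ 2))
        with (2 * (1 + INR n ^ 2) + 2 * a ^ 2 + 2 * (INR n ^ 2 / a ^ 2)) by (field; lra).
      nra. }
    pose proof (Rpower_le_base_nonpos (Y * Y) (K * X) g ltac:(nra) ltac:(lra)) as hmono.
    rewrite <- !Rpower_mult_distr, <- Rpower_plus in hmono by assumption.
    replace (g + g) with (2 * g) in hmono by ring.
    pose proof (exp_pos (g * ln K)) as hKg; fold (Rpower K g) in hKg.
    apply (Rmult_le_reg_l (Rpower K g)); [exact hKg|].
    rewrite <- Rmult_assoc, Rinv_r, Rmult_1_l by lra; exact hmono.
  - apply (ex_series_scal_l (V := R_NormedModule)).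
    apply (ex_series_ext (fun n => Rpower (INR n + 1) (- (- (2 * g))))).
    + intros n; rewrite Ropp_involutive; reflexivity.
    + apply ex_series_Rpower_neg; lra.
Qed.

(** * Summation over the integers *)

Lemma Zsummable_halves (f : Z -> R) : Zsummable f ->
  ex_series (fun n => f (Z.of_nat n)) /\ ex_series (fun n => f (- Z.of_nat (S n))%Z).
Proof. intros [h1 h2]; split; apply ex_series_Rabs; assumption. Qed.

Lemma Zsummable_nonneg (f : Z -> R) : (forall k, 0 <= f k) ->
  ex_series (fun n => f (Z.of_nat n)) -> ex_series (fun n => f (- Z.of_nat (S n))%Z) ->
  Zsummable f.
Proof.
  intros h h1 h2; split.
  - eapply ex_series_ext; [|exact h1]; intros n; simpl; rewrite Rabs_pos_eq; auto.
  - eapply ex_series_ext; [|exact h2]; intros n; simpl; rewrite Rabs_pos_eq; auto.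
Qed.

Lemma Zsummable_le (f g : Z -> R) :
  (forall k, Rabs (f k) <= g k) -> Zsummable g -> Zsummable f.
Proof.
  intros h [g1 g2].
  assert (hb : forall x, norm (Rabs (f x)) <= Rabs (g x)).
  { intros x; change norm with Rabs; rewrite Rabs_Rabsolu.
    eapply Rle_trans; [apply h | apply Rle_abs]. }
  split; eapply (ex_series_le (V := R_CompleteNormedModule)); try (intros n; apply hb); assumption.
Qed.

Lemma Zsummable_ext (f g : Z -> R) : (forall k, f k = g k) -> Zsummable f -> Zsummable g.
Proof.
  intros h [h1 h2]; split.
  - refine (ex_series_ext _ _ _ h1); intros n; cbv beta; rewrite h; reflexivity.
  - refine (ex_series_ext _ _ _ h2); intros n; cbv beta; rewrite h; reflexivity.
Qed.

Lemma Zsummable_plus (f g : Z -> R) :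
  Zsummable f -> Zsummable g -> Zsummable (fun k => f k + g k).
Proof.
  intros [f1 f2] [g1 g2].
  assert (hb : forall x, norm (Rabs (f x + g x)) <= Rabs (f x) + Rabs (g x)).
  { intros x; change norm with Rabs; rewrite Rabs_Rabsolu; apply Rabs_triang. }
  split; eapply (ex_series_le (V := R_CompleteNormedModule)); try (intros n; apply hb);
    apply (ex_series_plus (V := R_NormedModule)); assumption.
Qed.

Lemma Zsummable_scal (c : R) (f : Z -> R) : Zsummable f -> Zsummable (fun k => c * f k).
Proof.
  intros [f1 f2].
  assert (hb : forall x, Rabs (c * f x) = Rabs c * Rabs (f x)) by (intros; apply Rabs_mult).
  split; eapply ex_series_ext; try (intros n; symmetry; apply hb);
    apply (ex_series_scal_l (V := R_NormedModule)); assumption.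
Qed.

Lemma Zsummable_Rpower_decay (a g : R) : 0 < a -> g < -1/2 ->
  Zsummable (fun k => Rpower (1 + IZR k ^ 2 / a ^ 2) g).
Proof.
  intros ha hg; pose proof (ex_series_Rpower_decay a g ha hg) as hs.
  apply Zsummable_nonneg; [intros; apply Rlt_le, exp_pos | |].
  - refine (ex_series_ext _ _ _ hs); intros n; cbv beta.
    rewrite <- INR_IZR_INZ; reflexivity.
  - apply (ex_series_incr_1 (V := R_NormedModule)) in hs.
    refine (ex_series_ext _ _ _ hs); intros n; cbv beta.
    rewrite opp_IZR, <- INR_IZR_INZ.
    replace ((- INR (S n)) ^ 2) with (INR (S n) ^ 2) by ring; reflexivity.
Qed.

Lemma Zsum_ext (f g : Z -> R) : (forall k, f k = g k) -> Zsum f = Zsum g.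
Proof. intros h; unfold Zsum; f_equal; apply Series_ext; intros; apply h. Qed.

Lemma Zsum_plus (f g : Z -> R) :
  Zsummable f -> Zsummable g -> Zsum (fun k => f k + g k) = Zsum f + Zsum g.
Proof.
  intros hf hg.
  destruct (Zsummable_halves f hf), (Zsummable_halves g hg).
  unfold Zsum; rewrite !Series_plus by assumption; ring.
Qed.

Lemma Zsum_scal (c : R) (f : Z -> R) : Zsum (fun k => c * f k) = c * Zsum f.
Proof. unfold Zsum; rewrite !Series_scal_l; ring. Qed.

Lemma Zsum_le (f g : Z -> R) :
  (forall k, 0 <= f k <= g k) -> Zsummable g -> Zsum f <= Zsum g.
Proof.
  intros h hg; destruct (Zsummable_halves g hg).
  unfold Zsum; apply Rplus_le_compat; apply Series_le; auto.
Qed.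

Lemma Zsum_pos (f : Z -> R) : (forall k, 0 < f k) -> Zsummable f -> 0 < Zsum f.
Proof.
  intros h hf; destruct (Zsummable_halves f hf) as [hs_pos hs_neg].
  unfold Zsum; rewrite Series_incr_1 by exact hs_pos.
  assert (htail : 0 <= Series (fun n => f (Z.of_nat (S n)))).
  { apply Series_nonneg; [intros; apply Rlt_le, h|].
    apply (ex_series_incr_1 (V := R_NormedModule) (fun n => f (Z.of_nat n))); exact hs_pos. }
  assert (hneg : 0 <= Series (fun n => f (- Z.of_nat (S n))%Z))
    by (apply Series_nonneg; [intros; apply Rlt_le, h | exact hs_neg]).
  specialize (h (Z.of_nat 0)); lra.
Qed.

(* No summability is needed: both halves are literally opposite series. *)
Lemma Zsum_odd (f : Z -> R) : (forall k, f (- k)%Z = - f k) -> Zsum f = 0.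
Proof.
  intros h; unfold Zsum.
  assert (h0 : f 0%Z = 0) by (specialize (h 0%Z); simpl in h; lra).
  rewrite Series_incr_1_aux by exact h0.
  rewrite (Series_ext (fun n => f (- Z.of_nat (S n))%Z) (fun n => - f (Z.of_nat (S n))))
    by (intros; apply h).
  rewrite Series_opp; ring.
Qed.

(** * Concavity of the Tsallis functional *)

Lemma powq_pos (x q : R) : 0 < x -> powq x q = Rpower x q.
Proof. intros hx; unfold powq; destruct (Rle_dec x 0); [lra | reflexivity]. Qed.

Lemma powq_nonneg (x q : R) : 0 <= powq x q.
Proof. unfold powq; destruct (Rle_dec x 0); [lra | apply Rlt_le, exp_pos]. Qed.

(* Concavity of [x |-> x^q]: the right-hand side is its tangent line at [y]. *)
Lemma powq_le_tangent (x y q : R) : 0 < q < 1 -> 0 <= x -> 0 < y ->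
  powq x q <= (1 - q) * Rpower y q + q * Rpower y (q - 1) * x.
Proof.
  intros hq hx hy.
  pose proof (exp_pos (q * ln y)) as hyq; fold (Rpower y q) in hyq.
  pose proof (exp_pos ((q - 1) * ln y)) as hyq1; fold (Rpower y (q - 1)) in hyq1.
  destruct (Req_dec x 0) as [->|hx0].
  - unfold powq; destruct (Rle_dec 0 0); [nra | lra].
  - rewrite powq_pos by lra.
    replace x with (x / y * y) at 1 by (field; lra).
    rewrite <- Rpower_mult_distr by (try apply Rdiv_lt_0_compat; lra).
    pose proof (Rpower_le_bernoulli (x / y) q ltac:(apply Rdiv_lt_0_compat; lra) hq) as hb.
    apply (Rmult_le_compat_r (Rpower y q)) in hb; [|lra].
    rewrite (Rpower_sub1 y q hy) in hb |- *.
    eapply Rle_trans; [exact hb|]; right; field; lra.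
Qed.

Lemma tsallis_le_of_cross_le (q : R) (p P : Z -> R) :
  0 < q < 1 -> (forall k, 0 <= p k) -> (forall k, 0 < P k) ->
  Zsummable (fun k => Rpower (P k) q) ->
  Zsummable (fun k => Rpower (P k) (q - 1) * p k) ->
  Zsum (fun k => Rpower (P k) (q - 1) * p k) <= Zsum (fun k => Rpower (P k) q) ->
  tsallis q p <= tsallis q P.
Proof.
  intros hq hp hP hPq hcross hle.
  assert (hSP : Zsum (fun k => powq (P k) q) = Zsum (fun k => Rpower (P k) q))
    by (apply Zsum_ext; intros; apply powq_pos, hP).
  assert (hSp : Zsum (fun k => powq (p k) q)
                <= (1 - q) * Zsum (fun k => Rpower (P k) q)
                   + q * Zsum (fun k => Rpower (P k) (q - 1) * p k)).
  { rewrite <- !Zsum_scal, <- Zsum_plus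
      by (apply Zsummable_scal; assumption).
    apply Zsum_le.
    - intros k; split; [apply powq_nonneg|].
      eapply Rle_trans; [apply (powq_le_tangent (p k) (P k) q); auto | right; ring].
    - apply Zsummable_plus; apply Zsummable_scal; assumption. }
  unfold tsallis; rewrite hSP.
  set (Sp := Zsum (fun k => powq (p k) q)) in *.
  set (SP := Zsum (fun k => Rpower (P k) q)) in *.
  assert (Sp <= SP) by nra.
  replace ((1 - Sp) / (q - 1)) with ((Sp - 1) / (1 - q)) by (field; lra).
  replace ((1 - SP) / (q - 1)) with ((SP - 1) / (1 - q)) by (field; lra).
  apply Rmult_le_compat_r; [apply Rlt_le, Rinv_0_lt_compat | ]; lra.
Qed.

(** * The distribution [p^(a)] *)

Lemma qweight_pos (q a : R) (k : Z) : 0 < qweight q a k.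
Proof. apply exp_pos. Qed.

Lemma pa_even (q a : R) (k : Z) : pa q a (- k) = pa q a k.
Proof. unfold pa, qweight; rewrite opp_IZR; do 4 f_equal; ring. Qed.

Lemma Zsum_mom1_pa (q a : R) : Zsum (mom1 (pa q a)) = 0.
Proof. apply Zsum_odd; intros k; unfold mom1; rewrite pa_even, opp_IZR; ring. Qed.

Section Maximizer.

Variables q a : R.
Hypothesis hq1 : 1/3 < q.
Hypothesis hq2 : q < 1.
Hypothesis ha : 0 < a.

Let base (k : Z) : R := 1 + IZR k ^ 2 / a ^ 2.

Lemma base_ge1 (k : Z) : 1 <= base k.
Proof. pose proof (sqr_div_sqr_ge0 (IZR k) a ha); unfold base; lra. Qed.

Lemma Zsummable_base_qweight : Zsummable (fun k => base k * qweight q a k).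
Proof.
  assert (he : 1 / (q - 1) + 1 < -1/2).
  { apply (Rplus_lt_reg_r (-1)); apply (Rmult_lt_reg_r (1 - q)); [lra|].
    replace ((1 / (q - 1) + 1 + -1) * (1 - q)) with (-1) by (field; lra); lra. }
  apply (Zsummable_ext (fun k => Rpower (1 + IZR k ^ 2 / a ^ 2) (1 / (q - 1) + 1))).
  - intros k; pose proof (base_ge1 k); unfold qweight, base in *.
    rewrite Rpower_plus, Rpower_1 by lra; ring.
  - exact (Zsummable_Rpower_decay a _ ha he).
Qed.

Lemma Zsummable_qweight : Zsummable (qweight q a).
Proof.
  apply (Zsummable_le _ _) with (2 := Zsummable_base_qweight); intros k.
  rewrite Rabs_pos_eq by apply Rlt_le, qweight_pos.
  pose proof (base_ge1 k); pose proof (qweight_pos q a k); nra.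
Qed.

Lemma Zsummable_mom2_qweight : Zsummable (mom2 (qweight q a)).
Proof.
  apply (Zsummable_le _ _) with (2 := Zsummable_scal (a ^ 2) _ Zsummable_base_qweight).
  intros k; cbv beta; unfold mom2, base; pose proof (qweight_pos q a k).
  rewrite Rabs_pos_eq by (apply Rmult_le_pos; [apply pow2_ge_0 | lra]).
  replace (a ^ 2 * ((1 + IZR k ^ 2 / a ^ 2) * qweight q a k))
    with (a ^ 2 * qweight q a k + IZR k ^ 2 * qweight q a k) by (field; lra).
  pose proof (pow_lt a 2 ha); nra.
Qed.

Lemma fq_pos : 0 < fq q a.
Proof. apply Zsum_pos; [apply qweight_pos | exact Zsummable_qweight]. Qed.

Lemma pa_pos (k : Z) : 0 < pa q a k.
Proof. apply Rdiv_lt_0_compat; [apply qweight_pos | exact fq_pos]. Qed.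

Lemma pa_scal (k : Z) : pa q a k = / fq q a * qweight q a k.
Proof. unfold pa; apply Rmult_comm. Qed.

Lemma is_prob_pa : is_prob (pa q a).
Proof.
  split; [intros k; apply Rlt_le, pa_pos|]; split.
  - apply (Zsummable_ext _ _ (fun k => eq_sym (pa_scal k))).
    apply Zsummable_scal, Zsummable_qweight.
  - rewrite (Zsum_ext _ _ pa_scal), Zsum_scal.
    apply Rinv_l, Rgt_not_eq, fq_pos.
Qed.

Lemma Zsummable_mom2_pa : Zsummable (mom2 (pa q a)).
Proof.
  apply (Zsummable_ext (fun k => / fq q a * mom2 (qweight q a) k)).
  - intros k; unfold mom2; rewrite pa_scal; ring.
  - apply Zsummable_scal, Zsummable_mom2_qweight.
Qed.

Lemma Zsummable_mom1_pa : Zsummable (mom1 (pa q a)).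
Proof.
  destruct is_prob_pa as [_ [hpa _]].
  apply (Zsummable_le _ _) with (2 := Zsummable_plus _ _ hpa Zsummable_mom2_pa).
  intros k; unfold mom1, mom2; pose proof (pa_pos k).
  rewrite Rabs_mult, (Rabs_pos_eq (pa q a k)) by lra.
  assert (Rabs (IZR k) <= 1 + IZR k ^ 2)
    by (pose proof (pow2_abs (IZR k)); pose proof (Rabs_pos (IZR k)); nra).
  nra.
Qed.

Lemma pa_Rpower_sub1 (k : Z) :
  Rpower (pa q a k) (q - 1) = Rpower (fq q a) (1 - q) * base k.
Proof.
  pose proof (base_ge1 k); pose proof fq_pos.
  rewrite pa_scal, <- Rpower_mult_distr by (apply Rinv_0_lt_compat || apply qweight_pos; lra).
  unfold qweight; fold (base k).
  rewrite Rpower_mult; replace (1 / (q - 1) * (q - 1)) with 1 by (field; lra).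
  rewrite Rpower_1 by lra.
  unfold Rpower at 1; rewrite ln_Rinv by lra.
  replace ((q - 1) * - ln (fq q a)) with ((1 - q) * ln (fq q a)) by ring.
  reflexivity.
Qed.

Lemma pa_cross_expand (r : Z -> R) (k : Z) :
  Rpower (pa q a k) (q - 1) * r k
  = Rpower (fq q a) (1 - q) * r k + Rpower (fq q a) (1 - q) / a ^ 2 * mom2 r k.
Proof. rewrite pa_Rpower_sub1; unfold base, mom2; field; lra. Qed.

Lemma Zsummable_pa_cross (r : Z -> R) : Zsummable r -> Zsummable (mom2 r) ->
  Zsummable (fun k => Rpower (pa q a k) (q - 1) * r k).
Proof.
  intros hr hr2; apply (Zsummable_ext _ _ (fun k => eq_sym (pa_cross_expand r k))).
  apply Zsummable_plus; apply Zsummable_scal; assumption.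
Qed.

Lemma Zsum_pa_cross (r : Z -> R) : Zsummable r -> Zsummable (mom2 r) ->
  Zsum (fun k => Rpower (pa q a k) (q - 1) * r k)
  = Rpower (fq q a) (1 - q) * (Zsum r + Zsum (mom2 r) / a ^ 2).
Proof.
  intros hr hr2; rewrite (Zsum_ext _ _ (pa_cross_expand r)).
  rewrite Zsum_plus, !Zsum_scal by (apply Zsummable_scal; assumption).
  field; lra.
Qed.

End Maximizer.

Theorem theorem1 (q a : R) (hq1 : 1/3 < q) (hq2 : q < 1) (ha : 0 < a) :
  is_prob (pa q a) /\
  Zsummable (mom1 (pa q a)) /\ Zsum (mom1 (pa q a)) = 0 /\
  Zsummable (mom2 (pa q a)) /\
  (forall p : Z -> R,
     is_prob p ->
     Zsummable (mom1 p) -> Zsum (mom1 p) = 0 ->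
     Zsummable (mom2 p) -> Zsum (mom2 p) = Zsum (mom2 (pa q a)) ->
     tsallis q p <= tsallis q (pa q a)).
Proof.
  pose proof (is_prob_pa q a hq1 hq2 ha) as hP.
  pose proof (Zsummable_mom2_pa q a hq1 hq2 ha) as hP2.
  split; [exact hP|]; split; [exact (Zsummable_mom1_pa q a hq1 hq2 ha)|].
  split; [apply Zsum_mom1_pa|]; split; [exact hP2|].
  intros p [hp0 [hp hp1]] _ _ hp2 hvar.
  destruct hP as [_ [hPs hP1]].
  assert (hPq : forall k, Rpower (pa q a k) q = Rpower (pa q a k) (q - 1) * pa q a k)
    by (intros k; apply Rpower_sub1, (pa_pos q a hq1 hq2 ha)).
  apply tsallis_le_of_cross_le; [lra | exact hp0 | apply (pa_pos q a hq1 hq2 ha) | | | ].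
  - apply (Zsummable_ext _ _ (fun k => eq_sym (hPq k))).
    apply Zsummable_pa_cross; assumption.
  - apply Zsummable_pa_cross; assumption.
  - rewrite (Zsum_ext _ _ hPq), !Zsum_pa_cross by assumption.
    rewrite hp1, hP1, hvar; lra.
Qed.
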